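(* Let $a,b,q$ be complex numbers with $q\ne 0$. Let $A=(A_{n,k})_{n,k\ge0}$ be the infinite lower-triangular matrix with entries $$A_{n,k}=[z^{n-k}]\Big\{\frac{(az;q)_k}{(bz;q)_k}\Big\}\quad(n\ge k),\qquad A_{n,k}=0\ (n<k),$$ and let $A^{-1}=(B_{n,k}(a,b))$ be its inverse. Then for all integers $n\ge k\ge0$, $$B_{n,k}(a,b)=[z^{n-k}]\Big\{\frac{(bz;q)_{n-1}}{(az;q)_n}\Big\}-a\sum_{i=k}^{n-1}B_{n-i,1}(a,b)\,q^{(n-i)i}\,[z^{i-k}]\Big\{\frac{(bz;q)_i}{(az;q)_{i+1}}\Big\}.$$
   Context: For any integer $n$, $(x;q)_n=\prod_{j\ge0}(1-xq^j)/\prod_{j\ge0}(1-xq^{n+j})$, so $(x;q)_0=1$, $(x;q)_n=\prod_{j=0}^{n-1}(1-xq^j)$ for $n\ge1$, $(x;q)_{-1}=1/(1-x/q)$; quotients of these are regarded as formal power series in $z$, and $[z^m]\{f\}$ is the coefficient of $z^m$ in $f$. Two lower-triangular matrices $A,B$ are inverse if $\sum_{i=k}^nA_{n,i}B_{i,k}=\sum_{i=k}^nB_{n,i}A_{i,k}=\delta_{n,k}$ for all $n,k\ge0$. Equivalently, $z^k=\sum_{n\ge k}B_{n,k}(a,b)z^n(az;q)_n/(bz;q)_n$ for all $k\ge0$. Empty sums are $0$. *)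

From HB Require Import structures.
From mathcomp Require Import all_boot all_order all_algebra.
From mathcomp Require Import reals complex.
Set Implicit Arguments. Unset Strict Implicit. Unset Printing Implicit Defensive.
Import Order.TTheory GRing.Theory Num.Theory.
Local Open Scope ring_scope.

(* Formal power series coefficients of quotients of polynomials in z.
   A "rational series" is a pair (N, D) of polynomials in z standing for N/D,
   with D having nonzero constant term. *)
Section FPS.
Variable C : fieldType.

(* coefficients 0..m of the formal inverse 1/D (requires D`_0 != 0) *)
Fixpoint inv_seq (D : {poly C}) (m : nat) : seq C :=
  match m with
  | 0 => [:: (D`_0)^-1]
  | m'.+1 => let s := inv_seq D m' in
      rcons s (- (D`_0)^-1 * \sum_(1 <= i < m'.+2) D`_i * nth 0 s (m'.+1 - i))
  end.

Definition fps_inv (D : {poly C}) (m : nat) : C := nth 0 (inv_seq D m) m.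

Definition coefz (ND : {poly C} * {poly C}) (m : nat) : C :=
  \sum_(i < m.+1) ND.1`_i * fps_inv ND.2 (m - i).

(* (x z; q)_n for integer n, as a pair (numerator, denominator) of
   polynomials in z:
   n = k >= 0 : prod_{j<k} (1 - x q^j z) / 1
   n = -(k+1) : 1 / prod_{j=1}^{k+1} (1 - x q^{-j} z) *)
Definition qpoch (x q : C) (n : int) : {poly C} * {poly C} :=
  match n with
  | Posz k => (\prod_(j < k) (1 - (x * q ^+ j) *: 'X), 1)
  | Negz k => (1, \prod_(j < k.+1) (1 - (x * q ^- j.+1) *: 'X))
  end.

Definition rdiv (P Q : {poly C} * {poly C}) : {poly C} * {poly C} :=
  (P.1 * Q.2, P.2 * Q.1).

Definition Amat (a b q : C) (n k : nat) : C :=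
  if (k <= n)%N then coefz (rdiv (qpoch a q k) (qpoch b q k)) (n - k) else 0.

Definition lower_tri_inverse (A B : nat -> nat -> C) : Prop :=
  (forall n k, (n < k)%N -> B n k = 0) /\
  (forall n k, (k <= n)%N ->
     \sum_(k <= i < n.+1) A n i * B i k = (n == k)%:R /\
     \sum_(k <= i < n.+1) B n i * A i k = (n == k)%:R).
End FPS.

From HB Require Import structures.
From mathcomp Require Import all_boot all_order all_algebra.
From mathcomp Require Import reals complex.
From mathcomp Require Import ring zify.
Set Implicit Arguments. Unset Strict Implicit. Unset Printing Implicit Defensive.
Import Order.TTheory GRing.Theory Num.Theory.
Local Open Scope ring_scope.

(* Write D_r for the series (bz;q)_r / (az;q)_(r+1) ([qratio r]). Since the
   k-th column of A is generated by (az;q)_k / (bz;q)_k and (bz;q)_r = (bz;q)_k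
   (bq^k z;q)_(r-k), multiplying D_r by that column series gives D_(r-k)(q^k
   z). Hence the row ([z^(n-j)] D_(n-1))_j times A is 1 on the diagonal and
   q^(l(n-l)) [z^(n-l)] D_(n-1-l) = a q^(l(n-l)) [z^(n-1-l)] D_(n-l) at l < n,
   the equality [z^(r+1)] D_r = a [z^r] D_(r+1) being an identity between
   products of Gaussian binomials (q-binomial theorem for the numerator and its
   dual for 1/(az;q)_(r+1)). Multiplying back by B = A^-1 expresses B_(n,k)
   through these coefficients; the same computation for the rows ([z^(i-j)]
   D_i)_j writes [z^(n-1-l)] D_(n-l) through the column B_(.,1), and exchanging
   the two summations gives the formula. *)

Section QBinomial.
Variables (R : comNzRingType) (x : R).

Fixpoint qbinom (n k : nat) : R :=
  match n, k with
  | 0, _ => (k == 0)%:R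
  | n'.+1, 0 => 1
  | n'.+1, k'.+1 => qbinom n' k + x ^+ (n' - k') * qbinom n' k'
  end.

Definition qint (m : nat) : R := \sum_(j < m) x ^+ j.

Definition qfact (n : nat) : R := \prod_(i < n) qint i.+1.

Lemma qbinomn0 n : qbinom n 0 = 1. Proof. by case: n. Qed.

Lemma qbinom_small n k : (n < k)%N -> qbinom n k = 0.
Proof.
elim: n k => [|n IH] [|k] //= ltnk.
by rewrite !IH ?mulr0 ?addr0 // ltnW.
Qed.

Lemma qbinomnn n : qbinom n n = 1.
Proof.
by elim: n => [|n IH] //=; rewrite qbinom_small // subnn expr0 mul1r IH add0r.
Qed.

Lemma qintD m l : qint (m + l) = qint m + x ^+ m * qint l.
Proof.
rewrite /qint big_split_ord /= mulr_sumr.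
by congr (_ + _); apply: eq_bigr => i _; rewrite exprD.
Qed.

Lemma qfactS n : qfact n.+1 = qfact n * qint n.+1.
Proof. by rewrite /qfact big_ord_recr. Qed.

Lemma qbinomSS n k : qbinom n.+1 k.+1 = qbinom n k.+1 + x ^+ (n - k) * qbinom n k.
Proof. by []. Qed.

Lemma qbinom_fact k d : qbinom (k + d) k * qfact k * qfact d = qfact (k + d).
Proof.
elim: k d => [|k IHk] d; first by rewrite qbinomn0 /qfact big_ord0 !mul1r.
elim: d => [|d IHd]; first by rewrite addn0 qbinomnn /qfact big_ord0 !mulr1 mul1r.
have IHk' := IHk d.+1; rewrite -addSnnS in IHk'.
rewrite addnS qbinomSS addSn subSn ?leq_addr // addKn -addSn.
rewrite (qfactS (k.+1 + d)).
have -> : qint (k.+1 + d).+1 = qint d.+1 + x ^+ d.+1 * qint k.+1.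
  by rewrite -qintD addnC addSn.
rewrite mulrDr -{1}IHd -IHk' !qfactS; ring.
Qed.

End QBinomial.

Lemma horner_qbinom (R : comNzRingType) (x : R) n k :
  (qbinom 'X n k).[x] = qbinom x n k.
Proof. by elim: n k => [|n IH] [|k] /=; rewrite ?hornerE // !IH. Qed.

Section QBinomialIdomain.
Variable R : idomainType.
Local Notation X := ('X : {poly R}).

Lemma qbinom_trinomial (x : R) i y :
  qbinom x (i + y) i * qbinom x (i + y + y).+1 y.+1 =
  qbinom x (i + y).+1 i * qbinom x (i + y + y).+1 y.
Proof.
have qfact_neq0 n : qfact X n != 0.
  apply/prodf_neq0 => m _; apply/eqP => /(congr1 (fun p : {poly R} => p`_0)).
  rewrite /qint coef_sum big_ord_recl coefXn big1 => [|j _]; last by rewrite coefXn.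
  by rewrite addr0 coef0 => /eqP; rewrite oner_eq0.
rewrite -!(horner_qbinom x) -!hornerM; congr (_.[x]).
apply: (mulIf (qfact_neq0 i)); apply: (mulIf (qfact_neq0 y)).
apply: (mulIf (qfact_neq0 y.+1)).
have fact_i_y := qbinom_fact X i y.
have fact_y1_iy := qbinom_fact X y.+1 (i + y).
have fact_i_y1 := qbinom_fact X i y.+1.
have fact_y_iy1 := qbinom_fact X y (i + y).+1.
rewrite addnS in fact_i_y1; rewrite [(y.+1 + _)%N]addnC addnS in fact_y1_iy.
rewrite [(y + _)%N]addnC addSn in fact_y_iy1.
transitivity (qbinom X (i + y + y).+1 y.+1 * qfact X y.+1 *
  (qbinom X (i + y) i * qfact X i * qfact X y)); first ring.
by rewrite fact_i_y fact_y1_iy -fact_y_iy1 -fact_i_y1; ring.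
Qed.

End QBinomialIdomain.

Section PolyTruncation.
Variable R : comNzRingType.
Implicit Types p r : {poly R}.

Lemma take_polyMl n p r : take_poly n (take_poly n p * r) = take_poly n (p * r).
Proof.
by rewrite -{2}(poly_take_drop n p) mulrDl mulrAC take_polyD take_polyMXn_0 addr0.
Qed.

Lemma take_polyMr n p r : take_poly n (p * take_poly n r) = take_poly n (p * r).
Proof. by rewrite mulrC take_polyMl mulrC. Qed.

End PolyTruncation.

Section QPochhammer.
Variables (R : comNzRingType) (q : R).

Definition qpochz (x : R) (m : nat) : {poly R} := \prod_(j < m) (1 - (x * q ^+ j) *: 'X).

Lemma qpochzS x m : qpochz x m.+1 = qpochz x m * (1 - (x * q ^+ m) *: 'X).
Proof. by rewrite /qpochz big_ord_recr. Qed.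

Lemma qpochzD x k m : qpochz x (k + m) = qpochz x k * qpochz (x * q ^+ k) m.
Proof.
rewrite /qpochz big_split_ord /=; congr (_ * _); apply: eq_bigr => j _.
by rewrite exprD mulrA.
Qed.

Lemma coef_qpochz x m i : (qpochz x m)`_i = (-x) ^+ i * q ^+ 'C(i, 2) * qbinom q m i.
Proof.
elim: m i => [|m IH] i.
  by rewrite /qpochz big_ord0 coef1; case: i => [|i]; rewrite /= ?mulr0 // !expr0 !mul1r.
rewrite qpochzS mulrBr mulr1 -scalerAr coefB coefZ coefMX.
case: i => [|i] /=; first by rewrite mulr0 subr0 IH !expr0 !mul1r qbinomn0.
rewrite !IH; case: (leqP i m) => [le_im | lt_mi]; last first.
  by rewrite !(qbinom_small q lt_mi, qbinom_small q (leqW lt_mi)) !(mulr0, addr0, subr0).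
have -> : q ^+ m = q ^+ i * q ^+ (m - i) by rewrite -exprD subnKC.
by rewrite (binS i 1) bin1 exprD exprS; ring.
Qed.

Lemma coef0_qpochz x m : (qpochz x m)`_0 = 1.
Proof. by rewrite coef_qpochz !expr0 !mul1r qbinomn0. Qed.

Lemma coef0_qpochz_neq0 x m : (qpochz x m)`_0 != 0.
Proof. by rewrite coef0_qpochz oner_neq0. Qed.

Lemma coef_qpochzM x c m i : (qpochz (x * c) m)`_i = c ^+ i * (qpochz x m)`_i.
Proof. by rewrite !coef_qpochz -mulNr exprMn; ring. Qed.

Definition qpochz_inv (x : R) (L M : nat) : {poly R} :=
  \poly_(j < M) (x ^+ j * qbinom q (L + j).-1 j).

Lemma take_qpochz_inv0 x M : (0 < M)%N -> take_poly M (qpochz_inv x 0 M) = 1.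
Proof.
move=> M_gt0; apply/polyP => m; rewrite coef_take_poly coef_poly coef1.
case: ltnP => [_ | le_Mm]; last by rewrite gtn_eqF // (leq_trans M_gt0 le_Mm).
by case: m => [|m]; rewrite add0n /= ?mulr1 // qbinom_small ?mulr0.
Qed.

Lemma take_qpochz_invS x L M :
  take_poly M ((1 - (x * q ^+ L) *: 'X) * qpochz_inv x L.+1 M) = qpochz_inv x L M.
Proof.
apply/polyP => m; rewrite coef_take_poly mulrBl mul1r -scalerAl coefB coefZ coefXM.
rewrite !coef_poly; case: ltnP => // lt_mM; case: m lt_mM => [|m] lt_mM.
  by rewrite /= mulr0 subr0 !qbinomn0.
by rewrite /= (ltnW lt_mM) addnS qbinomSS addnK exprS; ring.
Qed.

Lemma take_qpochz_inv x L M :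
  (0 < M)%N -> take_poly M (qpochz x L * qpochz_inv x L M) = 1.
Proof.
move=> M_gt0; elim: L => [|L IH]; first by rewrite /qpochz big_ord0 mul1r take_qpochz_inv0.
by rewrite qpochzS -mulrA -take_polyMr take_qpochz_invS.
Qed.

End QPochhammer.

Section FormalSeries.
Variable F : fieldType.
Implicit Types N D S H p r : {poly F}.

Lemma size_inv_seq D m : size (inv_seq D m) = m.+1.
Proof. by elim: m => [|m IH] //=; rewrite size_rcons IH. Qed.

Lemma nth_inv_seq D m j : (j <= m)%N -> nth 0 (inv_seq D m) j = fps_inv D j.
Proof.
elim: m => [|m IH]; first by rewrite leqn0 => /eqP ->.
rewrite leq_eqVlt => /orP [/eqP -> // | lt_jm].
by rewrite /= nth_rcons size_inv_seq lt_jm IH.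
Qed.

Lemma fps_invS D m : fps_inv D m.+1 =
  - (D`_0)^-1 * \sum_(1 <= i < m.+2) D`_i * fps_inv D (m.+1 - i).
Proof.
rewrite /fps_inv /= nth_rcons size_inv_seq ltnn eqxx; congr (_ * _).
rewrite !big_nat; apply: eq_bigr => i /andP [i_gt0 _]; rewrite nth_inv_seq //.
by rewrite leq_subLR -addn1 addnC leq_add2r.
Qed.

Lemma fps_invP D n : D`_0 != 0 ->
  \sum_(i < n.+1) D`_i * fps_inv D (n - i) = (n == 0)%:R.
Proof.
move=> D0; case: n => [|m]; first by rewrite big_ord1 /fps_inv /= mulfV.
rewrite big_ord_recl /= subn0 fps_invS mulrA mulrN mulfV // mulN1r.
rewrite big_add1 /= big_mkord addrC; apply/eqP; rewrite subr_eq0; apply/eqP.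
by apply: eq_bigr => i _; rewrite /bump /= add1n.
Qed.

Definition fps_inv_poly M D := \poly_(i < M) fps_inv D i.

Lemma take_fps_inv_poly M D : D`_0 != 0 -> (0 < M)%N ->
  take_poly M (D * fps_inv_poly M D) = 1.
Proof.
move=> D0 M_gt0; apply/polyP => m; rewrite coef_take_poly coef1 coefM.
case: ltnP => [lt_mM | le_Mm]; last by rewrite gtn_eqF // (leq_trans M_gt0 le_Mm).
rewrite -(fps_invP m D0); apply: eq_bigr => i _.
by rewrite coef_poly (leq_ltn_trans (leq_subr _ _) lt_mM).
Qed.

Lemma coefz_fps_inv_poly M N D e : (e < M)%N ->
  coefz (N, D) e = (N * fps_inv_poly M D)`_e.
Proof.
move=> lt_eM; rewrite /coefz coefM; apply: eq_bigr => i _ /=.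
by rewrite coef_poly (leq_ltn_trans (leq_subr _ _) lt_eM).
Qed.

Lemma take_mul_inv M N D H : take_poly M (D * H) = 1 ->
  take_poly M (D * (N * H)) = take_poly M N.
Proof. by move=> DH; rewrite mulrCA -take_polyMr DH mulr1. Qed.

Lemma coefz_unique M N D S e : (e < M)%N -> D`_0 != 0 ->
  take_poly M (D * S) = take_poly M N -> coefz (N, D) e = S`_e.
Proof.
move=> lt_eM D0 DS; have M_gt0 : (0 < M)%N := leq_ltn_trans (leq0n e) lt_eM.
have : take_poly M S = take_poly M (N * fps_inv_poly M D).
  rewrite -[S]mulr1 -(take_fps_inv_poly D0 M_gt0) take_polyMr mulrA [S * D]mulrC.
  by rewrite -take_polyMl DS take_polyMl.
move/(congr1 (fun p => p`_e)); rewrite !coef_take_poly lt_eM => ->.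
exact: coefz_fps_inv_poly.
Qed.

Lemma coefz_mul_inv M N D H e : (e < M)%N -> D`_0 != 0 ->
  take_poly M (D * H) = 1 -> coefz (N, D) e = (N * H)`_e.
Proof. by move=> lt_eM D0 DH; apply: coefz_unique lt_eM D0 (take_mul_inv N DH). Qed.

Lemma coefz0 N D : coefz (N, D) 0 = N`_0 / D`_0.
Proof. by rewrite /coefz big_ord1. Qed.

Lemma coefz_mul N1 D1 N2 D2 e : D1`_0 != 0 -> D2`_0 != 0 ->
  \sum_(j < e.+1) coefz (N1, D1) (e - j) * coefz (N2, D2) j =
  coefz (N1 * N2, D1 * D2) e.
Proof.
move=> D10 D20; set M := e.+1.
set S1 := N1 * fps_inv_poly M D1; set S2 := N2 * fps_inv_poly M D2.
rewrite (coefz_unique (S := S1 * S2) (ltnSn e)) ?coef0M ?mulf_neq0 //; last first.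
  rewrite mulrACA -take_polyMl -take_polyMr !take_mul_inv ?take_fps_inv_poly //.
  by rewrite take_polyMr take_polyMl.
rewrite coefMr; apply: eq_bigr => j _.
by rewrite !(coefz_fps_inv_poly (M := M)) // ltnS leq_subr.
Qed.

Lemma coefz_ratio N1 D1 N2 D2 e : D1`_0 != 0 -> D2`_0 != 0 ->
  N1 * D2 = N2 * D1 -> coefz (N1, D1) e = coefz (N2, D2) e.
Proof.
move=> D10 D20 N1D2; rewrite (coefz_fps_inv_poly _ _ (ltnSn e)).
apply/esym/(coefz_unique (ltnSn e) D20).
by rewrite mulrA [D2 * N1]mulrC N1D2 -mulrA mulrCA take_mul_inv ?take_fps_inv_poly.
Qed.

Lemma coef_mul_dilate c p r p' r' m :
  (forall i, (i <= m)%N -> p'`_i = c ^+ i * p`_i) ->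
  (forall i, (i <= m)%N -> r'`_i = c ^+ i * r`_i) ->
  (p' * r')`_m = c ^+ m * (p * r)`_m.
Proof.
move=> p'E r'E; rewrite !coefM mulr_sumr; apply: eq_bigr => -[i /= lt_im] _.
rewrite p'E ?r'E ?leq_subr // -?ltnS //.
have -> : c ^+ m = c ^+ i * c ^+ (m - i) by rewrite -exprD subnKC.
ring.
Qed.

Lemma coefz_dilate c N D N' D' e : D`_0 != 0 ->
  (forall i, N'`_i = c ^+ i * N`_i) -> (forall i, D'`_i = c ^+ i * D`_i) ->
  coefz (N', D') e = c ^+ e * coefz (N, D) e.
Proof.
move=> D0 N'E D'E; rewrite [coefz (N, D) e](coefz_fps_inv_poly _ _ (ltnSn e)).
set S := N * fps_inv_poly e.+1 D.
have DS : take_poly e.+1 (D * S) = take_poly e.+1 N.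
  by rewrite take_mul_inv ?take_fps_inv_poly.
rewrite (coefz_unique (S := \poly_(i < e.+1) (c ^+ i * S`_i)) (ltnSn e)).
- by rewrite coef_poly ltnSn.
- by rewrite D'E expr0 mul1r.
apply/polyP => m; rewrite !coef_take_poly; case: ifP => // lt_mM.
rewrite (coef_mul_dilate (c := c) (p := D) (r := S)) => [|i _ |i le_im]; rewrite ?D'E //.
  by move/(congr1 (fun p => p`_m)): DS; rewrite !coef_take_poly lt_mM N'E => ->.
by rewrite coef_poly (leq_ltn_trans le_im lt_mM).
Qed.

End FormalSeries.

Section QRatio.
Variables (F : fieldType) (q a b : F).

Lemma coef0_prod_subZX (I : Type) (s : seq I) (c : I -> F) :
  (\prod_(j <- s) (1 - c j *: 'X))`_0 = 1.
Proof. by rewrite coef0_prod big1 // => j _; rewrite coefB coef1 coefZ coefX mulr0 subr0. Qed.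

Lemma coefz0_rdiv_qpoch (x y : F) (m n : int) :
  coefz (rdiv (qpoch x q m) (qpoch y q n)) 0 = 1.
Proof.
case: m => m; case: n => n;
  by rewrite coefz0 /= !coef0M !coef0_prod_subZX coef1 !(mul1r, mulr1, invr1).
Qed.

Lemma coefz_rdiv_qpoch (x y : F) (m n : nat) e :
  coefz (rdiv (qpoch x q m) (qpoch y q n)) e = coefz (qpochz q x m, qpochz q y n) e.
Proof. by rewrite /rdiv /= mulr1 mul1r. Qed.

Lemma Amat_qpochz n k : (k <= n)%N ->
  Amat a b q n k = coefz (qpochz q a k, qpochz q b k) (n - k).
Proof. by move=> le_kn; rewrite /Amat le_kn coefz_rdiv_qpoch. Qed.

Lemma Amat_diag n : Amat a b q n n = 1.
Proof. by rewrite /Amat leqnn subnn coefz0_rdiv_qpoch. Qed.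

Definition qratio (r : nat) : {poly F} * {poly F} := (qpochz q b r, qpochz q a r.+1).

Lemma coefz_qratio0 r : coefz (qratio r) 0 = 1.
Proof. by rewrite coefz0 !coef0_qpochz divr1. Qed.

Lemma coefz_qratio_shift r : coefz (qratio r) r.+1 = a * coefz (qratio r.+1) r.
Proof.
have M_gt0 : (0 < r.+2)%N by [].
rewrite /qratio (coefz_mul_inv _ _ _ (take_qpochz_inv q a r.+1 M_gt0)) ?coef0_qpochz_neq0 //.
rewrite (coefz_mul_inv _ _ _ (take_qpochz_inv q a r.+2 M_gt0)) ?coef0_qpochz_neq0 //.
rewrite !coefM big_ord_recr /= coef_qpochz qbinom_small // mulr0 mul0r addr0.
rewrite mulr_sumr; apply: eq_bigr => -[i /= lt_ir] _.
have [y ->] : exists y, r = (i + y)%N by exists (r - i)%N; rewrite subnKC.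
have -> : ((i + y).+1 - i = y.+1)%N by lia.
have -> : (i + y - i = y)%N by lia.
rewrite !coef_qpochz !coef_poly !ifT; try lia.
have -> : ((i + y).+1 + y.+1).-1 = (i + y + y).+1 by lia.
have -> : ((i + y).+2 + y).-1 = (i + y + y).+1 by lia.
transitivity ((- b) ^+ i * q ^+ 'C(i, 2) * a ^+ y.+1 *
  (qbinom q (i + y) i * qbinom q (i + y + y).+1 y.+1)); first ring.
by rewrite qbinom_trinomial exprS; ring.
Qed.

Lemma coefz_qratio_mul k r e : (k <= r)%N ->
  \sum_(i < e.+1) coefz (qratio r) (e - i) * coefz (qpochz q a k, qpochz q b k) i =
  q ^+ (k * e) * coefz (qratio (r - k)) e.
Proof.
move=> le_kr; rewrite /qratio coefz_mul ?coef0_qpochz_neq0 //.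
have bE : qpochz q b r = qpochz q b k * qpochz q (b * q ^+ k) (r - k).
  by rewrite -qpochzD subnKC.
have aE : qpochz q a r.+1 = qpochz q a k * qpochz q (a * q ^+ k) (r - k).+1.
  by rewrite -qpochzD addnS subnKC.
rewrite (coefz_ratio (N2 := qpochz q (b * q ^+ k) (r - k))
                     (D2 := qpochz q (a * q ^+ k) (r - k).+1)).
- by rewrite exprM; apply: coefz_dilate => [|i|i]; rewrite ?coef0_qpochz_neq0 ?coef_qpochzM.
- by rewrite coef0M mulf_neq0 ?coef0_qpochz_neq0.
- exact: coef0_qpochz_neq0.
by rewrite bE aE; ring.
Qed.

Lemma sum_qratio_Amat k r e : (k <= r)%N ->
  \sum_(k <= j < (k + e).+1) coefz (qratio r) (k + e - j) * Amat a b q j k =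
  q ^+ (k * e) * coefz (qratio (r - k)) e.
Proof.
move=> le_kr; rewrite -coefz_qratio_mul // -{1}[k]add0n big_addn -addnS addKn big_mkord.
apply: eq_bigr => j _; rewrite Amat_qpochz ?leq_addl // addnK.
by rewrite [(j + k)%N]addnC subnDl.
Qed.

End QRatio.

Section LowerTriangularInverse.
Variable R : pzRingType.

Lemma sum_nat_triangle (G : nat -> nat -> R) k n :
  \sum_(k <= l < n) \sum_(l <= i < n) G l i =
  \sum_(k <= i < n) \sum_(k <= l < i.+1) G l i.
Proof.
transitivity (\sum_(k <= l < n) \sum_(k <= i < n | (l <= i)%N) G l i).
  by apply: eq_big_nat => l /andP [le_kl _]; rewrite (big_nat_widenl _ _ _ _ _ le_kl).
rewrite (exchange_big_dep_nat xpredT) //; apply: eq_big_nat => i /andP [_ lt_in].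
by rewrite (big_nat_widen _ _ _ _ _ lt_in).
Qed.

Variables A B : nat -> nat -> R.
Hypothesis AB : forall n k, (k <= n)%N -> \sum_(k <= i < n.+1) A n i * B i k = (n == k)%:R.

Lemma tri_mulmxK (y : nat -> R) k n : (k <= n)%N ->
  \sum_(k <= l < n.+1) (\sum_(l <= i < n.+1) y i * A i l) * B l k = y k.
Proof.
move=> le_kn; under eq_bigr do rewrite mulr_suml.
rewrite sum_nat_triangle.
transitivity (\sum_(k <= i < n.+1) y i * (i == k)%:R).
  apply: eq_big_nat => i /andP [le_ki _]; rewrite -AB // mulr_sumr.
  by apply: eq_bigr => l _; rewrite mulrA.
rewrite big_ltn ?ltnS // eqxx mulr1 big1_seq ?addr0 // => i /andP [_].
by rewrite mem_index_iota => /andP [lt_ki _]; rewrite gtn_eqF ?mulr0.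
Qed.

End LowerTriangularInverse.

Section Theorem2p1.
Variables (F : fieldType) (q a b : F) (B : nat -> nat -> F).
Hypothesis AB : forall n k, (k <= n)%N ->
  \sum_(k <= i < n.+1) Amat a b q n i * B i k = (n == k)%:R.

Local Notation qr := (qratio q a b).

(* The (i, l) entry of the product of the matrix ([z^(i-j)] D_i)_(i,j) with A. *)
Let DA i l := q ^+ (l * (i - l)) * coefz (qr (i - l)) (i - l).

Lemma sum_qratio_Amat_diag i l : (l <= i)%N ->
  \sum_(l <= j < i.+1) coefz (qr i) (i - j) * Amat a b q j l = DA i l.
Proof. by move=> le_li; have := sum_qratio_Amat q a b (i - l) le_li; rewrite subnKC. Qed.

Lemma coefz_qratio_expand i k : (k <= i)%N ->
  coefz (qr i) (i - k) = \sum_(k <= l < i.+1) DA i l * B l k.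
Proof.
move=> le_ki; rewrite -(tri_mulmxK AB (fun j => coefz (qr i) (i - j)) le_ki).
by apply: eq_big_nat => l /andP [_ lt_li]; rewrite sum_qratio_Amat_diag.
Qed.

Lemma sum_qratio_Amat_next m l : (l <= m)%N ->
  \sum_(l <= j < m.+2) coefz (qr m) (m.+1 - j) * Amat a b q j l =
  a * \sum_(l <= i < m.+1) B (m.+1 - i) 1 * q ^+ ((m.+1 - i) * i) * DA i l.
Proof.
move=> le_lm; have [u ->] : exists u, m = (l + u)%N by exists (m - l)%N; rewrite subnKC.
have := sum_qratio_Amat q a b u.+1 (leq_addr u l).
rewrite !addnS addKn => ->; rewrite coefz_qratio_shift.
have := coefz_qratio_expand (i := u.+1) (k := 1) isT; rewrite subn1 /= => ->.
rewrite mulrCA mulr_sumr; congr (a * _).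
rewrite big_add1 /= -{2}[l]add0n big_addn subSn ?leq_addr // addKn big_nat_rev.
apply: eq_big_nat => s /andP [_ lt_su]; rewrite add0n subSS /DA.
have [v ->] : exists v, u = (s + v)%N by exists (u - s)%N; rewrite subnKC // -ltnS.
have -> : (s + v - s = v)%N by rewrite addKn.
have -> : ((s + v).+1 - v.+1 = s)%N by rewrite subSS addnK.
have -> : ((l + (s + v)).+1 - (s + l) = v.+1)%N by lia.
rewrite addnK.
transitivity (q ^+ (l * (s + v).+1 + v.+1 * s) * coefz (qr s) s * B v.+1 1).
  by rewrite exprD; ring.
have -> : (l * (s + v).+1 + v.+1 * s = v.+1 * (s + l) + l * s)%N by lia.
by rewrite exprD; ring.
Qed.

Lemma inverse_Amat00 : B 0 0 = 1.
Proof. by have := AB (leqnn 0); rewrite big_nat1 Amat_diag mul1r. Qed.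

Lemma inverse_AmatS m k : (k <= m.+1)%N ->
  B m.+1 k = coefz (qr m) (m.+1 - k) -
    a * \sum_(k <= i < m.+1) B (m.+1 - i) 1 * q ^+ ((m.+1 - i) * i) * coefz (qr i) (i - k).
Proof.
move=> le_km.
have lower_rows : \sum_(k <= l < m.+1)
    (\sum_(l <= j < m.+2) coefz (qr m) (m.+1 - j) * Amat a b q j l) * B l k =
  a * \sum_(k <= i < m.+1) B (m.+1 - i) 1 * q ^+ ((m.+1 - i) * i) * coefz (qr i) (i - k).
  rewrite mulr_sumr.
  under [RHS]eq_big_nat => i /andP [le_ki _] do rewrite coefz_qratio_expand // !mulr_sumr.
  rewrite -sum_nat_triangle; apply: eq_big_nat => l /andP [_ lt_lm].
  rewrite sum_qratio_Amat_next // mulr_sumr mulr_suml.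
  by apply: eq_bigr => i _; rewrite !mulrA.
rewrite -(tri_mulmxK AB (fun j => coefz (qr m) (m.+1 - j)) le_km) big_nat_recr //=.
by rewrite big_nat1 subnn coefz_qratio0 Amat_diag !mul1r lower_rows addrC addrK.
Qed.

End Theorem2p1.

Theorem theorem2p1 (R : realType) (a b q : R[i]) (hq : q != 0)
  (B : nat -> nat -> R[i]) (hB : lower_tri_inverse (Amat a b q) B) :
  forall n k : nat, (k <= n)%N ->
    B n k =
      coefz (rdiv (qpoch b q (n%:Z - 1)) (qpoch a q n)) (n - k)
      - a * \sum_(k <= i < n)
              B (n - i)%N 1%N * q ^+ ((n - i) * i)
              * coefz (rdiv (qpoch b q i) (qpoch a q i.+1)) (i - k).
Proof.
have AB n k : (k <= n)%N -> \sum_(k <= i < n.+1) Amat a b q n i * B i k = (n == k)%:R.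
  by move=> le_kn; case: hB => _ /(_ n k le_kn) [].
move=> [|m] k le_kn.
  move: le_kn; rewrite leqn0 => /eqP ->.
  by rewrite big_geq // mulr0 subr0 coefz0_rdiv_qpoch (inverse_Amat00 AB).
have -> : m.+1%:Z - 1 = m by rewrite -addn1 PoszD addrK.
rewrite coefz_rdiv_qpoch.
under eq_bigr do rewrite coefz_rdiv_qpoch.
exact: inverse_AmatS.
Qed.
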